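(* Let $f:[a,b]\to\mathbb{R}$ be an $L$-Lipschitz convex function, and let $f(x^* )=\min_{x\in[a,b]}f(x)$. Set $x_1=\frac{3a+b}{4}$, $x_2=\frac{a+b}{2}$, $x_3=\frac{a+3b}{4}$. Suppose there exist constants $A\in\mathbb{R}$ and $\Delta>0$ such that $f(x_i)\in[A-\Delta,A+\Delta]$ for $i=1,2,3$. Then $$\max\{f(x_1),f(x_2),f(x_3)\}-f(x^* )\le4\Delta.$$ *)

From Stdlib Require Export Reals Lra.
Open Scope R_scope.

Definition lipschitz_on (f : R -> R) (L a b : R) : Prop :=
  forall x y, a <= x <= b -> a <= y <= b -> Rabs (f x - f y) <= L * Rabs (x - y).

Definition convex_on (f : R -> R) (a b : R) : Prop :=
  forall x y t, a <= x <= b -> a <= y <= b -> 0 <= t <= 1 ->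
    f (t * x + (1 - t) * y) <= t * f x + (1 - t) * f y.

Definition is_min_on (f : R -> R) (a b xs : R) : Prop :=
  a <= xs <= b /\ forall x, a <= x <= b -> f xs <= f x.

From Stdlib Require Import Psatz.

(* Every point p of [a,b] has a quarter point y between itself and a neighbouring
   quarter point q, with y at least halfway from q towards p (consecutive quarter
   points are (b-a)/4 apart and p is within (b-a)/4 of one of them).  Convexity on
   the line through q and y then gives f p >= 2 f y - f q >= 2 (A - Delta) - (A + Delta),
   so the minimum is at least A - 3 Delta, whereas the three sampled values are at
   most A + Delta. *)

Lemma convex_extrapolation_lb (f : R -> R) (a b p q t lo hi : R) :
  convex_on f a b -> a <= p <= b -> a <= q <= b -> 1 / 2 <= t <= 1 ->
  lo <= f (t * p + (1 - t) * q) -> f q <= hi -> lo <= hi ->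
  2 * lo - hi <= f p.
Proof.
  intros Hconv Hp Hq Ht Hlo Hhi Hlohi.
  assert (Hchord := Hconv p q t Hp Hq ltac:(lra)).
  (* t (f p - (2 lo - hi)) >= (2 t - 1) (hi - lo) >= 0 *)
  nra.
Qed.

Lemma convex_extrapolation_lb_between (f : R -> R) (a b p y q lo hi : R) :
  convex_on f a b -> a <= p <= b -> a <= q <= b ->
  (p <= y <= q /\ q - p <= 2 * (q - y)) \/ (q <= y <= p /\ p - q <= 2 * (y - q)) ->
  lo <= f y -> f q <= hi -> lo <= hi ->
  2 * lo - hi <= f p.
Proof.
  intros Hconv Hp Hq Hy Hlo Hhi Hlohi.
  destruct (Req_dec p q) as [<- | Hpq].
  { assert (y = p) as <- by lra; lra. }
  set (t := (q - y) / (q - p)).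
  assert (Ht : t * (q - p) = q - y) by (unfold t; field; lra).
  apply (convex_extrapolation_lb f a b p q t lo hi); auto.
  - split; nra.
  - replace (t * p + (1 - t) * q) with y by lra; exact Hlo.
Qed.

Lemma convex_lb_from_quarter_points (f : R -> R) (a b A Delta p : R) :
  convex_on f a b -> a <= p <= b ->
  A - Delta <= f ((3 * a + b) / 4) <= A + Delta ->
  A - Delta <= f ((a + b) / 2) <= A + Delta ->
  A - Delta <= f ((a + 3 * b) / 4) <= A + Delta ->
  A - 3 * Delta <= f p.
Proof.
  intros Hconv Hp H1 H2 H3.
  replace (A - 3 * Delta) with (2 * (A - Delta) - (A + Delta)) by ring.
  destruct (Rle_dec p ((3 * a + b) / 4)).
  { apply (convex_extrapolation_lb_between f a b p ((3 * a + b) / 4) ((a + b) / 2));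
      auto; lra. }
  destruct (Rle_dec p ((a + b) / 2)).
  { apply (convex_extrapolation_lb_between f a b p ((a + b) / 2) ((a + 3 * b) / 4));
      auto; lra. }
  destruct (Rle_dec p ((a + 3 * b) / 4)).
  { apply (convex_extrapolation_lb_between f a b p ((a + b) / 2) ((3 * a + b) / 4));
      auto; lra. }
  apply (convex_extrapolation_lb_between f a b p ((a + 3 * b) / 4) ((a + b) / 2));
    auto; lra.
Qed.

Theorem lemma11 (f : R -> R) (a b L xs A Delta : R) :
  a <= b ->
  lipschitz_on f L a b ->
  convex_on f a b ->
  is_min_on f a b xs ->
  0 < Delta ->
  (let x1 := (3 * a + b) / 4 in
   let x2 := (a + b) / 2 in
   let x3 := (a + 3 * b) / 4 in
   A - Delta <= f x1 <= A + Delta ->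
   A - Delta <= f x2 <= A + Delta ->
   A - Delta <= f x3 <= A + Delta ->
   Rmax (f x1) (Rmax (f x2) (f x3)) - f xs <= 4 * Delta).
Proof.
  intros _ _ Hconv [Hxs _] _ x1 x2 x3 H1 H2 H3.
  assert (Hmax : Rmax (f x1) (Rmax (f x2) (f x3)) <= A + Delta).
  { apply Rmax_lub; [lra | apply Rmax_lub; lra]. }
  assert (Hmin : A - 3 * Delta <= f xs)
    by exact (convex_lb_from_quarter_points f a b A Delta xs Hconv Hxs H1 H2 H3).
  lra.
Qed.
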